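(* Consider the iterative minimum repairing algorithm IMR($p$) described in the context. If the estimated parameters converge, i.e. $\lim_{k\to+\infty}\phi^{(k)}=\phi$ for some $\phi\in\mathbb{R}^p$, then the repair also converges: $$\lim_{k\to+\infty}\sum_{i=1}^n\left(y_i^{(k+1)}-y_i^{(k)}\right)=0.$$
   Context: Let $n\ge 1$ and let $x=(x_1,\dots,x_n)\in\mathbb{R}^n$ be an observed time series. A set $L\subseteq\{1,\dots,n\}$ of labeled indices is given, together with labeled values $y^{(0)}_t$ for $t\in L$; for $t\notin L$ put $y^{(0)}_t=x_t$. Fix an order $p\ge 1$ and a threshold $\tau\ge 0$. IMR($p$) produces sequences $y^{(k)}\in\mathbb{R}^n$, $k=0,1,2,\dots$; write $z^{(k)}_t=y^{(k)}_t-x_t$. In iteration $k$: (S1) Parameter estimation by ordinary least squares: $\phi^{(k)}=(\phi^{(k)}_1,\dots,\phi^{(k)}_p)^\top=((Z^{(k)})^\top Z^{(k)})^{-1}(Z^{(k)})^\top V^{(k)}$, where $V^{(k)}=(z^{(k)}_{p+1},\dots,z^{(k)}_n)^\top$ and $Z^{(k)}$ is the $(n-p)\times p$ matrix whose $r$-th row ($r=1,\dots,n-p$) is $(z^{(k)}_{r+p-1},z^{(k)}_{r+p-2},\dots,z^{(k)}_{r})$. (S2) For each $t\in\{p+1,\dots,n\}\setminus L$ compute $\hat y^{(k)}_t=\sum_{i=1}^p\phi^{(k)}_i z^{(k)}_{t-i}+x_t$; $t$ is a candidate only if $|\hat y^{(k)}_t-y^{(k)}_t|>\tau$. (S3) If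 candidates exist, choose a candidate $t^*$ minimizing $|\hat y^{(k)}_t-x_t|$ (ties broken arbitrarily), set $y^{(k+1)}_{t^*}=\hat y^{(k)}_{t^*}$ and keep all other values; if no candidate exists, the algorithm terminates and $y^{(k+1)}=y^{(k)}$ from then on. Labeled values are never modified. *)

From HB Require Import structures.
From mathcomp Require Import all_boot all_order all_algebra.
From mathcomp Require Import all_classical all_reals all_analysis.
Set Implicit Arguments. Unset Strict Implicit. Unset Printing Implicit Defensive.
Import Order.TTheory GRing.Theory Num.Theory.
Local Open Scope ring_scope.

(* Time series are indexed 1..n and represented as functions nat -> R;
   index 0 (and indices > n) are never used. *)

Section IMR.
Variable R : realType.

(* The (n-p) x p design matrix Z: row r (0-based, paper row r+1),
   column i (0-based, paper column i+1) holds z_{(r+1)+p-(i+1)} = z_{r+p-i}. *)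
Definition imr_Z (n p : nat) (z : nat -> R) : 'M[R]_(n - p, p) :=
  \matrix_(r < n - p, i < p) z (r + p - i)%N.

Definition imr_V (n p : nat) (z : nat -> R) : 'cV[R]_(n - p) :=
  \col_(r < n - p) z (r + p + 1)%N.

Definition imr_z (x y : nat -> R) : nat -> R := fun t => y t - x t.

(* OLS estimate phi = (Z^T Z)^{-1} Z^T V; entry i (0-based) is phi_{i+1}. *)
Definition imr_phi (n p : nat) (x y : nat -> R) : 'cV[R]_p :=
  let Z := imr_Z n p (imr_z x y) in
  invmx (Z^T *m Z) *m (Z^T *m imr_V n p (imr_z x y)).

Definition imr_ols_defined (n p : nat) (x y : nat -> R) : Prop :=
  let Z := imr_Z n p (imr_z x y) in (Z^T *m Z) \in unitmx.

Definition imr_yhat (n p : nat) (x y : nat -> R) (t : nat) : R :=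
  \sum_(i < p) imr_phi n p x y i ord0 * imr_z x y (t - i.+1)%N + x t.

Definition imr_cand (n p : nat) (tau : R) (L : nat -> bool) (x y : nat -> R)
  (t : nat) : bool :=
  [&& (p.+1 <= t)%N, (t <= n)%N, ~~ L t & tau < `|imr_yhat n p x y t - y t|].

(* One iteration (S1)-(S3) of IMR(p), from y^(k) = y to y^(k+1) = y'
   (only indices 1..n are constrained). Ties are broken arbitrarily. *)
Definition imr_step (n p : nat) (tau : R) (L : nat -> bool) (x y y' : nat -> R)
  : Prop :=
  (exists ts : nat,
      imr_cand n p tau L x y ts /\
      (forall t, imr_cand n p tau L x y t ->
         `|imr_yhat n p x y ts - x ts| <= `|imr_yhat n p x y t - x t|) /\
      (forall t, (1 <= t <= n)%N ->
         y' t = if t == ts then imr_yhat n p x y ts else y t))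
  \/
  ((forall t, ~~ imr_cand n p tau L x y t) /\
   (forall t, (1 <= t <= n)%N -> y' t = y t)).

End IMR.

From HB Require Import structures.
From mathcomp Require Import all_boot all_order all_algebra.
From mathcomp Require Import all_classical all_reals all_analysis.
From mathcomp Require Import zify.
Import Order.TTheory GRing.Theory Num.Theory.
Import numFieldNormedType.Exports.
Local Open Scope classical_set_scope.
Local Open Scope ring_scope.

(* Write z^(k)_t = y^(k)_t - x_t.  In each iteration a coordinate t either keeps
   its value or, if t > p is unlabeled, jumps to the prediction, whose residual is
   sum_i phi^(k)_i z^(k)_(t-i).  By strong induction on t every residual sequence
   converges: the prediction residuals converge because phi^(k) and the earlier
   residuals do, and a sequence that at each step either stays put or jumps onto a
   convergent sequence converges (it is either eventually constant or eventually
   close to that limit).  Consecutive differences therefore tend to 0.  Neither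
   the selection rule (S3) nor the threshold tau plays any role. *)

Lemma cvg_stay_or_jump {K : numFieldType} {V : pseudoMetricNormedZmodType K}
    (a w : V ^nat) (c : V) :
  (forall k, a k.+1 = a k \/ a k.+1 = w k) -> w @ \oo --> c -> cvgn a.
Proof.
move=> stay_or_jump w_c; apply/cvg_ex.
have [[N a_const]|jumps] :=
  pselect (exists N, forall k, (N <= k)%N -> a k.+1 = a k).
  have aN m : a (N + m)%N = a N.
    by elim: m => [|m IH]; rewrite ?addn0 // addnS a_const ?leq_addr.
  exists (a N); apply: cvg_near_cst; exists N => // k /= Nk.
  by rewrite -(subnKC Nk) aN.
exists c; apply/cvgrPdist_lt => e e0.
have [N _ w_near_c] := (cvgrPdist_lt _ _).1 w_c e e0.
have [k0 Nk0 jump] : exists2 k, (N <= k)%N & a k.+1 <> a k.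
  apply: contrapT => no_jump; apply: jumps; exists N => k Nk.
  by apply: contrapT => ak; apply: no_jump; exists k.
have a_near_c m : `|c - a (k0.+1 + m)%N| < e.
  elim: m => [|m IH].
    by rewrite addn0; case: (stay_or_jump k0) => // ->; apply: w_near_c.
  rewrite addnS; case: (stay_or_jump (k0.+1 + m)%N) => -> //.
  by apply: w_near_c => /=; lia.
by exists k0.+1 => // k /= k0k; rewrite -(subnKC k0k) a_near_c.
Qed.

Lemma cvg_sub_shiftS {K : numFieldType} {V : normedModType K} (a : V ^nat) :
  cvgn a -> (fun k => a k.+1 - a k) @ \oo --> 0.
Proof.
move=> /cvg_ex[l a_l]; rewrite -(subrr l).
by apply: cvgB => //; rewrite cvg_shiftS.
Qed.

Lemma cvg_sum_seq {K : numFieldType} {V : normedModType K} {I : eqType}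
    (r : seq I) (f : I -> V ^nat) (l : I -> V) :
  {in r, forall i, f i @ \oo --> l i} ->
  (fun k => \sum_(i <- r) f i k) @ \oo --> \sum_(i <- r) l i.
Proof.
move=> f_l; rewrite big_seq; under eq_fun do rewrite big_seq.
by apply: cvg_big => //; exact: add_continuous.
Qed.

Lemma imr_step_stay_or_predict {R : realType} {n p : nat} {tau : R}
    {L : nat -> bool} {x y y' : nat -> R} {t : nat} :
  imr_step n p tau L x y y' -> (1 <= t <= n)%N ->
  y' t = y t \/ [/\ (p < t)%N, ~~ L t & y' t = imr_yhat n p x y t].
Proof.
move=> [[ts [ts_cand [_ y'E]]] | [_ y'E]] t_range; rewrite y'E //; last by left.
have [->|_] := eqVneq t ts; last by left.
by right; case/and4P: ts_cand.
Qed.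

Lemma imr_yhat_residual {R : realType} (n p : nat) (x y : nat -> R) (t : nat) :
  imr_yhat n p x y t - x t =
  \sum_(i < p) imr_phi n p x y i ord0 * imr_z x y (t - i.+1).
Proof. by rewrite /imr_yhat addrK. Qed.

Section IMRConvergence.
Context {R : realType} {n p : nat} {tau : R} {x : nat -> R} {L : nat -> bool}.
Context {y : nat -> nat -> R} {phi : 'cV[R]_p}.
Hypothesis imr_y : forall k, imr_step n p tau L x (y k) (y k.+1).
Hypothesis phi_cvg : (fun k => imr_phi n p x (y k)) @ \oo --> phi.

Lemma imr_residual_cvg {t : nat} :
  (1 <= t <= n)%N -> cvgn (fun k => imr_z x (y k) t).
Proof.
elim/ltn_ind: t => t IH t_range.
have [/andP[pt Lt]|not_repairable] := boolP ((p < t)%N && ~~ L t).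
  apply: (@cvg_stay_or_jump _ _ _ (fun k =>
    \sum_(i < p) imr_phi n p x (y k) i ord0 * imr_z x (y k) (t - i.+1))).
    move=> k; rewrite /imr_z -imr_yhat_residual.
    by case: (imr_step_stay_or_predict (imr_y k) t_range) => [->|[_ _ ->]];
      [left | right].
  apply: cvg_sum_seq => i _; apply: cvgM.
    exact: cvg_comp phi_cvg (@coord_continuous R p 1 i ord0 phi).
  by apply: IH; have := ltn_ord i; lia.
apply: (@cvg_stay_or_jump _ _ _ (fun=> 0) 0); last exact: cvg_cst.
move=> k; left; rewrite /imr_z.
case: (imr_step_stay_or_predict (imr_y k) t_range) => [->//|[pt Lt _]].
by move: not_repairable; rewrite pt Lt.
Qed.

End IMRConvergence.

Theorem proposition3 (R : realType) (n p : nat) (tau : R)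
  (x : nat -> R) (L : nat -> bool) (y : nat -> nat -> R) :
  (1 <= n)%N -> (1 <= p)%N -> 0 <= tau ->
  (forall t, L t -> (1 <= t <= n)%N) ->
  (forall t, (1 <= t <= n)%N -> ~~ L t -> y 0%N t = x t) ->
  (forall k, imr_ols_defined n p x (y k)) ->
  (forall k, imr_step n p tau L x (y k) (y k.+1)) ->
  (exists phi : 'cV[R]_p, (fun k => imr_phi n p x (y k)) @ \oo --> phi) ->
  (fun k => \sum_(1 <= i < n.+1) (y k.+1 i - y k i)) @ \oo --> (0 : R).
Proof.
move=> _ _ _ _ _ _ imr_y [phi phi_cvg].
suff : (fun k => \sum_(1 <= i < n.+1) (y k.+1 i - y k i)) @ \oo -->
       \sum_(1 <= i < n.+1) (0 : R) by rewrite big1_eq.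
apply: cvg_sum_seq => t; rewrite mem_index_iota => t_range.
have residual_cvg := imr_residual_cvg imr_y phi_cvg t_range.
have -> : (fun k => y k.+1 t - y k t) =
          (fun k => imr_z x (y k.+1) t - imr_z x (y k) t).
  by apply/funext => k; rewrite /imr_z opprB addrA subrK.
exact: cvg_sub_shiftS residual_cvg.
Qed.
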